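(* If $T$ is a tree of maximum degree at most $3$, then $\gamma_e(T)\geq\frac{1}{6}(n(T)+2)$.
   Context: All graphs are finite, simple and undirected; $n(G)=|V(G)|$. For a graph $G$, a set $S\subseteq V(G)$, and vertices $u,v$ with $u\in S$ or $v\in S$, ${\rm dist}_{(G,S)}(u,v)$ is the minimum number of edges of a path $P$ in $G$ between $u$ and $v$ such that $S$ contains exactly one endvertex of $P$ and no internal vertex of $P$, and $\infty$ if no such path exists (so ${\rm dist}_{(G,S)}(u,u)=0$ for $u\in S$). For $u\in V(G)$, $w_{(G,S)}(u)=\sum_{v\in S}(1/2)^{{\rm dist}_{(G,S)}(u,v)-1}$ with $(1/2)^{\infty}=0$. $S$ is an exponential dominating set of $G$ if $w_{(G,S)}(u)\geq 1$ for every $u\in V(G)$, and $\gamma_e(G)$ is the minimum cardinality of an exponential dominating set of $G$. *)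

From HB Require Import structures.
From mathcomp Require Import all_boot all_order all_algebra.
Set Implicit Arguments. Unset Strict Implicit. Unset Printing Implicit Defensive.
Import Order.TTheory GRing.Theory Num.Theory.

Definition simple_graph (T : finType) (e : rel T) : Prop :=
  symmetric e /\ irreflexive e.

Definition connected_graph (T : finType) (e : rel T) : Prop :=
  forall x y : T, connect e x y.

Definition acyclic_graph (T : finType) (e : rel T) : Prop :=
  forall c : seq T, 3 <= size c -> uniq c -> ~~ cycle e c.

Definition is_tree (T : finType) (e : rel T) : Prop :=
  [/\ simple_graph e, 0 < #|T|, connected_graph e & acyclic_graph e].

Definition deg (T : finType) (e : rel T) (x : T) : nat := #|[set y | e x y]|.

Definition max_deg_le (T : finType) (e : rel T) (k : nat) : Prop :=
  forall x : T, deg e x <= k.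

(* u :: p is a path in G from u to v, with exactly one endvertex in S and no
   internal vertex in S (for the trivial path u = v its unique endvertex
   must lie in S). *)
Definition spath (T : finType) (e : rel T) (S : {set T}) (u v : T)
    (p : seq T) : bool :=
  [&& path e u p, last u p == v, uniq (u :: p) &
      if p is [::] then u \in S
      else ((u \in S) != (v \in S)) && all (fun x => x \notin S) (behead (belast u p))].

Definition spath_len (T : finType) (e : rel T) (S : {set T}) (u v : T)
    (k : nat) : bool :=
  [exists t : k.-tuple T, spath e S u v t].

(* dist_(G,S)(u,v): the minimum number of edges of such a path, None = oo.
   A path (uniq vertex list) has fewer than #|T| edges, so searching
   k in [0, #|T|) is exhaustive. *)
Definition sdist (T : finType) (e : rel T) (S : {set T}) (u v : T)
    : option nat :=
  let k := find (spath_len e S u v) (iota 0 #|T|) in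
  if k < #|T| then Some k else None.

Definition expweight (T : finType) (e : rel T) (S : {set T}) (u : T) : rat :=
  \sum_(v in S)
    match sdist e S u v with
    | Some d => ((1 / 2 : rat) ^ (d%:Z - 1))%R
    | None => 0%R
    end.

Definition exp_dominating (T : finType) (e : rel T) (S : {set T}) : Prop :=
  forall u : T, (1 <= expweight e S u)%R.

Definition exp_dominatingb (T : finType) (e : rel T) (S : {set T}) : bool :=
  [forall u : T, (1 <= expweight e S u)%R].

(* gamma_e(G): minimum cardinality of an exponential dominating set
   (V(G) itself is one, so the default #|T| never exceeds the true min). *)
Definition gamma_e (T : finType) (e : rel T) : nat :=
  \big[minn/#|T|]_(S : {set T} | exp_dominatingb e S) #|S|.

From HB Require Import structures.
From mathcomp Require Import all_boot all_order all_algebra zify.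
Set Implicit Arguments. Unset Strict Implicit. Unset Printing Implicit Defensive.
Import Order.TTheory GRing.Theory Num.Theory.

(* Let S be an exponential dominating set. Since w(u) >= 1 for u outside S,
   sum_{u not in S} (3 - deg u) is at most
   sum_{v in S} sum_{u not in S} (3 - deg u) (1/2)^(dist(u,v) - 1).
   Fix v in S and sort the vertices outside S into levels N_d by their
   distance to v.  A vertex of N_{d+1} has a neighbour in N_d and a vertex of
   N_d has a neighbour outside N_{d+1}; with maximum degree 3 this gives
   |N_{d+1}| + sum_{N_d} (3 - deg) <= 2 |N_d|, and telescoping against the
   weights (1/2)^(d-1) bounds the inner sum by 2 |N_1| <= 2 deg v.  As a tree
   has degree sum 2n - 2, the left-hand side is at least
   n + 2 - sum_{v in S} (3 - deg v), whence n + 2 <= sum_{v in S} (3 + deg v)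
   <= 6 |S|. *)

Lemma sum_nat_of_bool (T : finType) (A : {set T}) (P : pred T) :
  \sum_(y in A) (P y : nat) = #|[set y in A | P y]|.
Proof.
rewrite -sum1_card big_mkcond [RHS]big_mkcond; apply: eq_bigr => y _.
by rewrite !inE; case: (y \in A); case: (P y).
Qed.

Section Forest.
Variables (T : finType) (e : rel T).
Hypotheses (e_sym : symmetric e) (e_irr : irreflexive e)
  (e_acyclic : acyclic_graph e).

(* Otherwise [y], the path from [y] to the last vertex and the edge back
   to [y] would close a cycle of length at least 3. *)
Lemma acyclic_last_adj x s y :
  path e x s -> uniq (x :: s) -> y \in x :: s -> e (last x s) y ->
  exists p, x :: s = p ++ [:: y; last x s].
Proof.
move=> xs_path xs_uniq y_in last_y.
have [p1 [p2 def_xs]] : exists p1 p2, x :: s = p1 ++ y :: p2.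
  by case/splitPr: y_in => p1 p2; exists p1, p2.
have p2_path : path e y p2.
  move: xs_path; rewrite -[path e x s]/(sorted e (x :: s)) def_xs.
  by rewrite sorted_cat_cons => /andP [].
have p2_uniq : uniq (y :: p2) by move: xs_uniq; rewrite def_xs cat_uniq => /and3P [].
have last_p2 : last x s = last y p2.
  by rewrite -[last x s]/(last x (x :: s)) def_xs last_cat.
rewrite def_xs last_p2 in last_y *.
case: p2 last_y p2_path p2_uniq {def_xs last_p2} => [|w [|w' p2]] last_y.
- by rewrite /= e_irr in last_y.
- by exists p1.
move=> p2_path p2_uniq.
have := e_acyclic (c := [:: y, w, w' & p2]) isT p2_uniq.
by rewrite /cycle rcons_path p2_path last_y.
Qed.

Section NoLeaf.
Variable A : {set T}.
Hypothesis A_branching : forall z, z \in A -> 1 < #|[set y in A | e z y]|.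

(* A path inside [A] can always be extended at its last vertex, which has two
   neighbours in [A] of which at most one already lies on the path. *)
Lemma branching_long_path x0 : x0 \in A -> forall m,
  exists x s, size s = m /\
    [&& x \in A, all (mem A) s, uniq (x :: s) & path e x s].
Proof.
move=> x0A; elim=> [|m [x [s [size_s /and4P [xA sA xs_uniq xs_path]]]]].
  by exists x0, [::]; rewrite x0A.
have lastA : last x s \in A.
  by have := mem_last x s; rewrite inE => /predU1P [->|/(allP sA)].
suff [y yA [y_new e_y]] : exists2 y, y \in A & y \notin x :: s /\ e (last x s) y.
  exists x, (rcons s y); rewrite size_rcons size_s; split=> //.
  rewrite xA all_rcons sA rcons_path xs_path e_y -rcons_cons rcons_uniq.
  by rewrite y_new xs_uniq /= yA.
have [y1 [y2 [y1N y2N y12]]] := card_gt1P (A_branching lastA).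
move: y1N y2N; rewrite !inE => /andP [y1A e1] /andP [y2A e2].
have [y1_old|] := boolP (y1 \in x :: s); last by exists y1.
have [y2_old|] := boolP (y2 \in x :: s); last by exists y2.
have [p1 def1] := acyclic_last_adj xs_path xs_uniq y1_old e1.
have [p2 def2] := acyclic_last_adj xs_path xs_uniq y2_old e2.
have := congr1 (fun l => head y1 (behead (rev l))) (etrans (esym def1) def2).
by rewrite !rev_cat /= => y12E; rewrite y12E eqxx in y12.
Qed.

Lemma branching_empty : A = set0.
Proof.
apply/eqP; apply/set0Pn => -[x0 x0A].
have [x [s [size_s /and4P [_ _ xs_uniq _]]]] := branching_long_path x0A #|T|.
by have := max_card (mem (x :: s)); rewrite (card_uniqP xs_uniq) /= size_s ltnn.
Qed.

End NoLeaf.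

Lemma acyclic_leaf (A : {set T}) : A != set0 ->
  exists2 z, z \in A & #|[set y in A | e z y]| <= 1.
Proof.
move=> A0; apply/exists_inP; apply: contraNT A0 => /exists_inPn A_branching.
by apply/eqP; apply: branching_empty => z /A_branching; rewrite ltnNge.
Qed.

Definition adj_sum (A : {set T}) := \sum_(x in A) \sum_(y in A) (e x y : nat).

Lemma adj_sumD1 (A : {set T}) z : z \in A ->
  adj_sum A = 2 * #|[set y in A | e z y]| + adj_sum (A :\ z).
Proof.
move=> zA; rewrite /adj_sum (bigD1 z zA) /=.
have -> : \sum_(x in A | x != z) \sum_(y in A) (e x y : nat) =
    \sum_(x in A :\ z) ((e x z : nat) + \sum_(y in A :\ z) (e x y : nat)).
  apply: eq_big => [x|x _]; first by rewrite !inE andbC.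
  rewrite (bigD1 z zA) /=; apply/eqP; rewrite eqn_add2l; apply/eqP/eq_bigl => y.
  by rewrite !inE andbC.
have col_z : \sum_(x in A :\ z) (e x z : nat) = #|[set y in A | e z y]|.
  rewrite -sum_nat_of_bool [RHS](bigD1 z zA) /= e_irr add0n.
  by apply: eq_big => [x|x _]; rewrite ?inE 1?andbC // e_sym.
by rewrite big_split /= col_z sum_nat_of_bool addnA mul2n -addnn.
Qed.

Lemma adj_sum_le (A : {set T}) : A != set0 -> adj_sum A + 2 <= 2 * #|A|.
Proof.
rewrite -card_gt0; move: {2}#|A| (erefl #|A|) => [->//|n] + _.
elim: n A => [|n IH] A cardA.
  have [z ->] : exists z, A = [set z] by apply/cards1P; rewrite cardA.
  by rewrite /adj_sum !big_set1 e_irr cards1.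
have [z zA z_leaf] : exists2 z, z \in A & #|[set y in A | e z y]| <= 1.
  by apply: acyclic_leaf; rewrite -card_gt0 cardA.
have cardB : #|A :\ z| = n.+1 by move: cardA; rewrite (cardsD1 z A) zA => -[].
by have := IH _ cardB; rewrite (adj_sumD1 zA) cardA cardB; lia.
Qed.

Lemma sum_deg_le : 0 < #|T| -> \sum_x deg e x + 2 <= 2 * #|T|.
Proof.
rewrite -cardsT card_gt0 => T0.
suff -> : \sum_x deg e x = adj_sum [set: T] by apply: adj_sum_le.
apply: eq_big => [x|x _]; rewrite ?inE // sum_nat_of_bool.
by apply: eq_card => y; rewrite !inE.
Qed.

End Forest.

Section ExpWeight.
Local Open Scope ring_scope.

Definition expw (d : nat) : rat := (1 / 2 : rat) ^ (d%:Z - 1).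

Lemma expwS d : expw d.+1 = (1 / 2) ^+ d.
Proof. by rewrite /expw intS addrAC subrr add0r. Qed.

Lemma expw_ge0 d : 0 <= expw d.
Proof. by rewrite exprz_ge0. Qed.

Variables (slack width : nat -> nat).
Hypotheses (slack0 : slack 0 = 0%N)
  (width_step : forall d, (0 < d)%N -> (width d.+1 + slack d <= 2 * width d)%N).

Lemma expw_telescope m :
  \sum_(d < m.+1) expw d * (slack d)%:R + 2 * expw m.+1 * (width m.+1)%:R
    <= 2 * (width 1%N)%:R.
Proof.
elim: m => [|m IH]; first by rewrite big_ord1 slack0 mulr0 add0r expwS mulr1.
rewrite big_ord_recr /=; apply: le_trans IH; rewrite -addrA lerD2l.
have halve : expw m.+2 = expw m.+1 / 2 by rewrite !expwS exprS mulrC mul1r.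
have := width_step (ltn0Sn m); rewrite -(ler_nat rat) natrD natrM.
move=> /(ler_wpM2l (expw_ge0 m.+1)); rewrite halve mulrDr.
by rewrite [2 * (_ / 2)]mulrC divfK // addrC [2 * expw _]mulrC -mulrA.
Qed.

Lemma expw_sum_le m : \sum_(d < m) expw d * (slack d)%:R <= 2 * (width 1%N)%:R.
Proof.
case: m => [|m]; first by rewrite big_ord0 mulr_ge0.
apply: le_trans (expw_telescope m); rewrite lerDl.
by rewrite !mulr_ge0 ?expw_ge0.
Qed.

End ExpWeight.

Section Levels.
Variables (T : finType) (e : rel T) (S : {set T}) (v : T).
Hypotheses (e_sym : symmetric e) (vS : v \in S).

Lemma spath_len_lt_card u k : spath_len e S u v k -> k < #|T|.
Proof.
move=> /existsP [t /and4P [_ _ ut_uniq _]].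
by have := max_card (mem (u :: t)); rewrite (card_uniqP ut_uniq) /= size_tuple.
Qed.

Lemma sdist_Some_min u d : sdist e S u v = Some d ->
  spath_len e S u v d /\ forall k, k < d -> ~~ spath_len e S u v k.
Proof.
rewrite /sdist; case: ifP => // d_lt [<-]; split.
  by have := nth_find 0 (a := spath_len e S u v) (s := iota 0 #|T|);
     rewrite has_find size_iota nth_iota //; apply.
move=> k k_lt; have k_lt_card := ltn_trans k_lt d_lt.
by have := before_find 0 k_lt; rewrite nth_iota ?size_iota // add0n => ->.
Qed.

Lemma sdist_le u k : spath_len e S u v k ->
  exists2 d, sdist e S u v = Some d & d <= k.
Proof.
move=> uk; have k_lt := spath_len_lt_card uk.
have find_le : find (spath_len e S u v) (iota 0 #|T|) <= k.
  by rewrite leqNgt; apply/negP => /(before_find 0); rewrite nth_iota // uk.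
exists (find (spath_len e S u v) (iota 0 #|T|)) => //.
by rewrite /sdist (leq_ltn_trans find_le k_lt).
Qed.

Definition clear_path u p := [&& path e u p, last u p == v, uniq (u :: p)
  & all (fun x => (x == v) || (x \notin S)) p].

Lemma spath_clear u p : u \notin S -> spath e S u v p = clear_path u p.
Proof.
move=> uS; rewrite /spath /clear_path; case: p => [|y p] /=.
  by case: eqP => [u_v|//]; rewrite u_v vS in uS.
rewrite (negbTE uS) vS /=.
case: (_ && path e y p) => //=.
case: (last y p =P v) => // last_v /=.
case uyp_uniq: [&& _, y \notin p & uniq p] => //=.
have /andP [last_new _] : (last y p \notin belast y p) && uniq (belast y p).
  by rewrite -rcons_uniq -lastI /=; case/and3P: uyp_uniq => _ -> ->.
rewrite -[_ && all _ p]/(all (fun x => (x == v) || (x \notin S)) (y :: p)).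
rewrite lastI all_rcons -last_v eqxx /=; apply: eq_in_all => x x_in.
by have -> : (x == last y p) = false by apply: contraNF last_new => /eqP <-.
Qed.

Lemma spath_lenP u k : u \notin S ->
  reflect (exists2 p, size p = k & clear_path u p) (spath_len e S u v k).
Proof.
move=> uS; apply: (iffP existsP) => [[t]|[p size_p]].
  by rewrite spath_clear // => ?; exists t; rewrite ?size_tuple.
rewrite -size_p -spath_clear // => ?; by exists (in_tuple p).
Qed.

Lemma clear_path_sdist_le u p : u \notin S -> clear_path u p ->
  exists2 d, sdist e S u v = Some d & d <= size p.
Proof. by move=> uS u_p; apply: sdist_le; apply/spath_lenP => //; exists p. Qed.

Lemma clear_path_suffix x s1 w s2 : clear_path x (s1 ++ w :: s2) -> clear_path w s2.
Proof.
case/and4P; rewrite cat_path last_cat -cat_cons cat_uniq all_cat /=.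
by move=> /and3P [_ _ ?] ? /and3P [_ _ ?] /and3P [_ _ ?]; apply/and4P.
Qed.

Lemma clear_path_cons w x s : e w x -> w \notin x :: s -> x \notin S ->
  clear_path x s -> clear_path w (x :: s).
Proof.
move=> e_wx w_new xS /and4P [xs_path xs_last xs_uniq xs_all].
by apply/and4P; split; rewrite /= ?e_wx ?w_new ?xS ?orbT.
Qed.

Lemma clear_path_behead w x s : clear_path w (x :: s) -> clear_path x s.
Proof.
by case/and4P => /andP [_ ?] ? /andP [_ ?] /andP [_ ?]; apply/and4P.
Qed.

Lemma spath_len_neighbour w x k : e w x -> w \notin S -> x \notin S ->
  spath_len e S x v k -> exists2 j, j <= k.+1 & spath_len e S w v j.
Proof.
move=> e_wx wS xS /(spath_lenP _ xS) [p size_p x_p].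
have [w_old|w_new] := boolP (w \in x :: p).
  case/predU1P: w_old => [->|w_in].
    by exists k; rewrite ?leqnSn //; apply/spath_lenP => //; exists p.
  case/splitPr: w_in x_p size_p => p1 p2 /clear_path_suffix w_p2 size_p.
  exists (size p2); first by rewrite -size_p size_cat /=; lia.
  by apply/spath_lenP => //; exists p2.
exists (size (x :: p)); first by rewrite /= size_p.
by apply/spath_lenP => //; exists (x :: p) => //; apply: clear_path_cons.
Qed.

Definition level d := [set u | (u \notin S) && (sdist e S u v == Some d)].

Lemma level_spath_len u d : u \in level d ->
  [/\ u \notin S, sdist e S u v = Some d & exists2 p, size p = d & clear_path u p].
Proof.
rewrite inE => /andP [uS /eqP u_d]; split=> //.
by apply/spath_lenP => //; case: (sdist_Some_min u_d).
Qed.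

Lemma level0 : level 0 = set0.
Proof.
apply/setP => u; rewrite in_set0; apply/negP => /level_spath_len [uS _ [[] // _]].
by case/and4P => _ /eqP /= u_v; rewrite u_v vS in uS.
Qed.

Lemma card_level1 : #|level 1| <= deg e v.
Proof.
apply: subset_leq_card; apply/subsetP => u /level_spath_len [_ _ [[|x []] //= _]].
by case/and4P => /andP [e_ux _] /eqP <-; rewrite inE e_sym.
Qed.

Lemma level_parent d w : 0 < d -> w \in level d.+1 ->
  exists2 x, x \in level d & e x w.
Proof.
move=> d_gt0 /[dup] /level_spath_len [wS w_d _].
rewrite inE => /andP [_ /eqP /sdist_Some_min [w_len w_min]].
case/(spath_lenP _ wS): w_len => [[|x [|y t]]] //= [size_t].
  by rewrite -size_t in d_gt0.
move=> /[dup] w_xt /and4P [/andP [e_wx _] /eqP last_v uniq_wxt /andP [x_clear _]].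
have xS : x \notin S.
  have x_v : x != v.
    apply: contraTneq uniq_wxt => ->.
    by rewrite -[v]last_v !cons_uniq /= mem_last /= andbF.
  by rewrite (negbTE x_v) in x_clear.
have [d' x_d' d'_le] := clear_path_sdist_le xS (clear_path_behead w_xt).
exists x; last by rewrite e_sym.
rewrite inE xS x_d' /= eqE /= eqn_leq -size_t d'_le /= leqNgt; apply/negP => d'_lt.
have [j j_le w_j] := spath_len_neighbour e_wx wS xS (sdist_Some_min x_d').1.
have j_lt : j < d.+1 by rewrite -size_t ltnS (leq_trans j_le d'_lt).
by rewrite (negbTE (w_min j j_lt)) in w_j.
Qed.

Lemma level_escape d x : 0 < d -> x \in level d ->
  exists2 y, e x y & y \notin level d.+1.
Proof.
move=> d_gt0 /level_spath_len [xS _ [[|y t] size_t x_yt]].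
  by rewrite -size_t in d_gt0.
exists y; first by case/and4P: x_yt => /andP [].
apply/negP => /level_spath_len [yS y_d _].
have [d' y_d' d'_le] := clear_path_sdist_le yS (clear_path_behead x_yt).
by rewrite y_d in y_d'; case: y_d' d'_le size_t => <- /=; lia.
Qed.

Hypothesis deg_le3 : max_deg_le e 3.

Definition slack d := \sum_(u in level d) (3 - deg e u).

(* A vertex [x] of level [d] has a neighbour outside level [d.+1], so at most
   [deg x - 1] vertices of level [d.+1] choose [x] as their parent. *)
Lemma level_count d : 0 < d -> #|level d.+1| + slack d <= 2 * #|level d|.
Proof.
move=> d_gt0; pose parent w := odflt w [pick x in level d | e x w].
have parentP w : w \in level d.+1 -> (parent w \in level d) && e (parent w) w.
  move=> /(level_parent d_gt0) [x xN e_xw]; rewrite /parent.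
  by case: pickP => [y /= -> //|/(_ x)]; rewrite xN e_xw.
have children x : x \in level d ->
    #|[set w | (w \in level d.+1) && (parent w == x)]| + (3 - deg e x) <= 2.
  move=> xN; have [y e_xy yN] := level_escape d_gt0 xN.
  have : [set w | (w \in level d.+1) && (parent w == x)] \proper [set y | e x y].
    apply/properP; split.
      apply/subsetP => w; rewrite [w \in _]inE => /andP [wN /eqP <-].
      by rewrite inE; case/andP: (parentP w wN).
    by exists y; rewrite [_ \in _]inE ?(negbTE yN).
  by move/proper_card; have := deg_le3 x; rewrite /deg; lia.
rewrite -sum1_card (partition_big parent (mem (level d))) /=; last first.
  by move=> w /parentP /andP [].
rewrite /slack -big_split /= mul2n -addnn -[X in _ <= X + _]sum1_card.
rewrite -[X in _ <= _ + X]sum1_card -big_split /=.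
by apply: leq_sum => x xN; rewrite sum1dep_card; have := children x xN; lia.
Qed.

Local Open Scope ring_scope.

Definition vweight u := if sdist e S u v is Some d then expw d else 0.

Lemma sum_vweight_levels (f : T -> rat) :
  \sum_(u | u \notin S) f u * vweight u =
    \sum_(d < #|T|) expw d * \sum_(u in level d) f u.
Proof.
have split_level u : f u * vweight u =
    \sum_(d < #|T|) (if sdist e S u v == Some (d : nat) then f u * expw d else 0).
  rewrite /vweight; case u_d: (sdist e S u v) => [d|]; last by rewrite big1 ?mulr0.
  have d_lt := spath_len_lt_card (sdist_Some_min u_d).1.
  rewrite (bigD1 (Ordinal d_lt)) //= eqxx big1 ?addr0 // => i i_d.
  by case: eqP => // -[i_val]; rewrite -(inj_eq val_inj) /= i_val eqxx in i_d.
rewrite (eq_bigr _ (fun u _ => split_level u)) exchange_big /=.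
apply: eq_bigr => d _; rewrite mulr_sumr big_mkcond [RHS]big_mkcond.
apply: eq_bigr => u _; rewrite inE.
by case: (u \notin S); case: (_ == _); rewrite //= mulrC.
Qed.

Lemma sum_slack_vweight_le :
  \sum_(u | u \notin S) (3 - deg e u)%:R * vweight u <= 2 * (deg e v)%:R.
Proof.
rewrite sum_vweight_levels.
have -> : \sum_(d < #|T|) expw d * \sum_(u in level d) ((3 - deg e u)%:R : rat) =
    \sum_(d < #|T|) expw d * (slack d)%:R by apply: eq_bigr => d _; rewrite natr_sum.
apply: le_trans (expw_sum_le _ level_count #|T|) _.
  by rewrite /slack level0 big_set0.
by rewrite ler_pM2l // ler_nat card_level1.
Qed.

End Levels.

Section Bound.
Variables (T : finType) (e : rel T).
Hypotheses (e_sym : symmetric e) (deg_le3 : max_deg_le e 3).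

Lemma sum_slack_outside_le (S : {set T}) : exp_dominating e S ->
  \sum_(x | x \notin S) (3 - deg e x) <= \sum_(v in S) 2 * deg e v.
Proof.
move=> S_dom; rewrite -(ler_nat rat) !natr_sum.
apply: (@le_trans _ _ (\sum_(x | x \notin S) (3 - deg e x)%:R * expweight e S x)%R).
  by apply: ler_sum => x _; rewrite ler_peMr // S_dom.
have -> : (\sum_(x | x \notin S) (3 - deg e x)%:R * expweight e S x =
    \sum_(v in S) \sum_(x | x \notin S) (3 - deg e x)%:R * vweight e S v x)%R.
  by rewrite exchange_big; apply: eq_bigr => x _; rewrite mulr_sumr.
by apply: ler_sum => v vS; rewrite natrM; apply: sum_slack_vweight_le.
Qed.

End Bound.

Lemma exp_dominating_card_ge (T : finType) (e : rel T) (S : {set T}) :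
  is_tree e -> max_deg_le e 3 -> exp_dominating e S -> #|T| + 2 <= 6 * #|S|.
Proof.
move=> [[e_sym e_irr] T_gt0 _ e_acyclic] deg_le3 S_dom.
have deg_sum := sum_deg_le e_sym e_irr e_acyclic T_gt0.
have slack_sum : \sum_x (3 - deg e x) + \sum_x deg e x = 3 * #|T|.
  rewrite -big_split -[#|T|]sum1_card big_distrr /=.
  by apply: eq_bigr => x _; rewrite subnK ?deg_le3 // muln1.
have outside := sum_slack_outside_le e_sym deg_le3 S_dom.
have inside : \sum_(x in S) (3 - deg e x) + \sum_(x in S) 2 * deg e x <= 6 * #|S|.
  rewrite -big_split -sum1_card big_distrr /=.
  by apply: leq_sum => x _; have := deg_le3 x; lia.
have split_S : \sum_x (3 - deg e x) =
    \sum_(x in S) (3 - deg e x) + \sum_(x | x \notin S) (3 - deg e x).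
  exact: bigID.
lia.
Qed.

Theorem theorem4 (T : finType) (e : rel T) :
  is_tree e -> max_deg_le e 3 ->
  ((#|T| + 2)%:R / 6 <= (gamma_e e)%:R :> rat)%R.
Proof.
move=> tree_e deg_le3.
have gamma_ge : #|T| + 2 <= 6 * gamma_e e.
  apply: (big_ind (fun k => #|T| + 2 <= 6 * k)) => [|j k|S /forallP].
  - by case: tree_e => _ T_gt0 _ _; lia.
  - by rewrite /minn; case: ltnP.
  - exact: exp_dominating_card_ge.
by rewrite ler_pdivrMr // mulrC -natrM ler_nat.
Qed.
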